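(* Let $F$ be a recurrent set and let $X\subset F$ be a bifix code of finite $F$-degree $d$. Then for every $w\in F$, $\delta_X(w)=\min\{d,\delta_{K(X)}(w)\}$. In particular, $X$ is determined by its $F$-degree and its kernel.
   Context: $A$ is a finite alphabet. $F\subset A^*$ is recurrent if it is nonempty, closed under factors, and for all $u,w\in F$ there is $v\in F$ with $uvw\in F$. A bifix code is a set of nonempty words none of which is a proper prefix or proper suffix of another. For a set $Y$, a parse of $w$ with respect to $Y$ is a triple $(v,y,u)$ with $w=vyu$, $v\in A^*\setminus A^*Y$, $y\in Y^*$, $u\in A^*\setminus YA^*$; $\delta_Y(w)$ is the number of parses, and $d_F(X)=\max_{w\in F}\delta_X(w)$. The kernel is $K(X)=\{x\in X\mid A^+xA^+\cap X\ne\emptyset\}$. *)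

From mathcomp Require Import all_boot.
From Stdlib Require Import ClassicalEpsilon.
Set Implicit Arguments. Unset Strict Implicit. Unset Printing Implicit Defensive.

Definition lang (A : Type) := seq A -> Prop.

Definition pb (P : Prop) : bool :=
  if excluded_middle_informative P then true else false.

Section Words.
Variable A : finType.

Definition factorial (F : lang A) : Prop :=
  forall w p m s : seq A, F w -> w = p ++ m ++ s -> F m.

Definition recurrent (F : lang A) : Prop :=
  (exists w, F w) /\ factorial F /\
  (forall u w, F u -> F w -> exists v, F v /\ F (u ++ v ++ w)).

Definition bifix_code (X : lang A) : Prop :=
  (forall x, X x -> x <> [::]) /\
  (forall x y s, X x -> X y -> y = x ++ s -> s = [::]) /\
  (forall x y p, X x -> X y -> y = p ++ x -> p = [::]).

Inductive star (Y : lang A) : seq A -> Prop :=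
| star_nil : star Y [::]
| star_cons y z : Y y -> star Y z -> star Y (y ++ z).

Definition in_AY (Y : lang A) (v : seq A) : Prop :=
  exists p y, v = p ++ y /\ Y y.
Definition in_YA (Y : lang A) (u : seq A) : Prop :=
  exists y s, u = y ++ s /\ Y y.

Definition is_parse (Y : lang A) (w v y u : seq A) : Prop :=
  w = v ++ y ++ u /\ ~ in_AY Y v /\ star Y y /\ ~ in_YA Y u.

(* delta_Y(w): number of parses of w.  A triple (v,y,u) with w = v y u is
   determined by (|v|, |v y|), so we count pairs i <= j <= |w|. *)
Definition delta (Y : lang A) (w : seq A) : nat :=
  \sum_(i < (size w).+1) \sum_(j < (size w).+1)
     pb (i <= j /\ is_parse Y w (take i w) (drop i (take j w)) (drop j w)).

Definition has_Fdegree (F X : lang A) (d : nat) : Prop :=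
  (forall w, F w -> delta X w <= d) /\ (exists w, F w /\ delta X w = d).

Definition kernel (X : lang A) : lang A :=
  fun x => X x /\ exists p s, p <> [::] /\ s <> [::] /\ X (p ++ x ++ s).

End Words.

From Pilot Require Import Defs.
From Stdlib Require Import ClassicalEpsilon FunctionalExtensionality PropExtensionality.
From mathcomp Require Import all_boot zify.
Set Implicit Arguments. Unset Strict Implicit. Unset Printing Implicit Defensive.

(* For a prefix code X, each prefix of w that does not end with a word of X is
   the left part of exactly one parse of w, so delta_X(w) = |w| + 1 - occ_X(w),
   where occ_X(w) counts the prefixes of w that do end with a word of X.
   If w is an internal factor of a word of X, every word of X occurring in w
   lies in the kernel, so delta_X(w) = delta_K(w).  Otherwise no word of X
   occurring in z v w v' z begins before w and ends after it, which makes occ,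
   hence delta, additive across w:
     delta(z v w) + delta(w v' z) = delta(z v w v' z) + delta(w).
   Taking z with delta(z) = d, recurrence supplies v, v' with z v w v' z in F;
   since delta grows under extension this gives delta(w) >= d, while
   delta_K >= delta_X always.
   For the second claim, equal degrees and kernels give equal delta on F, hence
   equal occ, hence the same words of F lie in A^*X and in A^*Y; bifixity then
   forces X = Y. *)

Lemma pbP (P : Prop) : reflect P (pb P).
Proof. by rewrite /pb; case: excluded_middle_informative => h; constructor. Qed.

Lemma eq_pb (P Q : Prop) : (P <-> Q) -> pb P = pb Q.
Proof. by move=> PQ; apply/idP/idP => /pbP h; apply/pbP; apply/PQ. Qed.

Lemma pb_eq_iff (P Q : Prop) : pb P = pb Q -> P <-> Q.
Proof. by move=> e; split=> h; move/pbP: h; [rewrite e | rewrite -e] => /pbP. Qed.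

Lemma sum_bool_le1 n (b : 'I_n -> bool) :
  (forall i j, b i -> b j -> i = j) -> \sum_(i < n) b i <= 1.
Proof.
move=> b_inj; case: (pickP b) => [i bi | b0]; last first.
  by rewrite big1 // => i _; rewrite b0.
rewrite (bigD1 i) //= bi big1 // => j /negbTE ji; apply/eqP; rewrite eqb0.
by apply/negP => /(b_inj _ _ bi)/eqP; rewrite eq_sym ji.
Qed.

Lemma sum_bool_eq1 n (b : 'I_n -> bool) i0 :
  b i0 -> (forall j, b j -> j = i0) -> \sum_(i < n) b i = 1.
Proof.
move=> bi0 b_i0; rewrite (bigD1 i0) //= bi0 big1 ?addn0 // => j /negbTE ji0.
by apply/eqP; rewrite eqb0; apply/negP => /b_i0/eqP; rewrite ji0.
Qed.

Section SeqFacts.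
Variable T : Type.
Implicit Types s u x y : seq T.

Lemma catI x : injective (cat x).
Proof. by move=> u v /(congr1 (drop (size x))); rewrite !drop_size_cat. Qed.

Lemma cat_eq_cat_cases x y u v : x ++ u = y ++ v ->
  (exists s, y = x ++ s) \/ (exists s, x = y ++ s).
Proof.
elim: x y => [|a x IH] [|b y] /=; try by [left; eexists | right; eexists].
by case=> -> /IH [[s ->] | [s ->]]; [left | right]; exists s.
Qed.

Lemma drop_take_cat i j s : i <= j -> drop i s = drop i (take j s) ++ drop j s.
Proof.
elim: s i j => [|a s IH] [|i] [|j] //=; first by rewrite cat_take_drop.
by rewrite ltnS; apply: IH.
Qed.

End SeqFacts.

Definition prefix_code (A : finType) (X : lang A) : Prop :=
  (forall x, X x -> x <> [::]) /\ (forall x y s, X x -> X y -> y = x ++ s -> s = [::]).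

Lemma bifix_prefix_code (A : finType) (X : lang A) : bifix_code X -> prefix_code X.
Proof. by case=> ne [pf _]. Qed.

Lemma prefix_code_sub (A : finType) (X Y : lang A) :
  (forall y, Y y -> X y) -> prefix_code X -> prefix_code Y.
Proof.
by move=> YX [ne pf]; split=> [x /YX /ne | x y s /YX Xx /YX]; last exact: pf.
Qed.

Definition internal_factor (A : finType) (X : lang A) (w : seq A) : Prop :=
  exists p s, p <> [::] /\ s <> [::] /\ X (p ++ w ++ s).

Lemma kernel_sub (A : finType) (X : lang A) x : kernel X x -> X x.
Proof. by case. Qed.

Definition star_split (A : finType) (X : lang A) (s : seq A) (k : nat) : Prop :=
  k <= size s /\ star X (take k s) /\ ~ in_YA X (drop k s).

Definition occ (A : finType) (X : lang A) (W : seq A) : nat :=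
  \sum_(j < (size W).+1) pb (in_AY X (take j W)).

Section Occurrences.
Variables (A : finType) (X : lang A).
Implicit Types a b c p q s u w W : seq A.

Lemma in_AY_cons x u : in_AY X (x :: u) -> X (x :: u) \/ in_AY X u.
Proof.
case=> [[|y p] [z [/= e Xz]]]; first by left; rewrite e.
by case: e => _ ->; right; exists p, z.
Qed.

Lemma in_AY_straddle a b s : ~ internal_factor X b -> s <> [::] ->
  in_AY X (a ++ b ++ s) <-> in_AY X (b ++ s).
Proof.
move=> nb sn; split=> [[p [y [e Xy]]] | [p [y [-> Xy]]]]; last first.
  by exists (a ++ p), y; rewrite catA.
have [[t ep] | [t ea]] := cat_eq_cat_cases e.
  by exists t, y; split=> //; apply: (@catI _ a); rewrite e ep -catA.
move: e; rewrite ea -catA => /catI ey.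
case: t ea ey => [|c t] _ ey; first by exists [::], y.
by case: nb; exists (c :: t), s; rewrite ey.
Qed.

Lemma occ_nil : occ X [::] = pb (in_AY X [::]).
Proof. by rewrite /occ big_ord_recl big_ord0 addn0. Qed.

Lemma occ_rcons W x : occ X (rcons W x) = occ X W + pb (in_AY X (rcons W x)).
Proof.
rewrite /occ size_rcons big_ord_recr /= take_oversize ?size_rcons //.
congr (_ + _); apply: eq_bigr => j _ /=.
by rewrite -cats1 takel_cat // -ltnS.
Qed.

Lemma occ_catr_le p q : occ X (p ++ q) <= occ X p + size q.
Proof.
elim/last_ind: q => [|q x IH]; first by rewrite cats0 addn0.
by rewrite -rcons_cat occ_rcons size_rcons addnS -addn1 leq_add // leq_b1.
Qed.

(* A word of X ending in the c-part of a ++ b ++ c and starting in the a-part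
   would make b internal. *)
Lemma occ_cat_straddle a b c : ~ internal_factor X b ->
  occ X (a ++ b ++ c) + occ X b = occ X (a ++ b) + occ X (b ++ c).
Proof.
move=> nb; elim/last_ind: c => [|c x IH]; first by rewrite !cats0.
rewrite -!rcons_cat !occ_rcons !rcons_cat.
have -> : pb (in_AY X (a ++ b ++ rcons c x)) = pb (in_AY X (b ++ rcons c x)).
  by apply: eq_pb; apply: in_AY_straddle => //; case: c {IH}.
lia.
Qed.

Lemma occ_sub (Y : lang A) W : (forall y, Y y -> X y) -> occ Y W <= occ X W.
Proof.
move=> YX; apply: leq_sum => j _.
case: (pbP (in_AY Y _)) => // [[p [y [e /YX Xy]]]].
by rewrite lt0b; apply/pbP; exists p, y.
Qed.

Lemma occ_internal_factor W : internal_factor X W -> occ (kernel X) W = occ X W.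
Proof.
move=> [p [s [pn [sn pWs]]]]; apply: eq_bigr => j _; congr nat_of_bool.
apply: eq_pb.
split=> [[q [y [e [Xy _]]]] | [q [y [e Xy]]]]; first by exists q, y.
exists q, y; do 2!split=> //.
exists (p ++ q), (drop j W ++ s); split; first by case: p pn {pWs}.
split; first by case: (drop j W); case: s sn {pWs}.
have -> : (p ++ q) ++ y ++ drop j W ++ s = p ++ (take j W ++ drop j W) ++ s.
  by rewrite e -!catA.
by rewrite cat_take_drop.
Qed.

End Occurrences.

Section PrefixCode.
Variables (A : finType) (X : lang A).
Hypothesis pcX : prefix_code X.
Implicit Types a b c p q s u w W : seq A.

Let X_nonempty : forall x, X x -> x <> [::] := pcX.1.
Let X_prefix_free : forall x y s, X x -> X y -> y = x ++ s -> s = [::] := pcX.2.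

Lemma prefix_free_cat_inj x y u v : X x -> X y -> x ++ u = y ++ v -> x = y /\ u = v.
Proof.
move=> Xx Xy e; suff exy : x = y by split=> //; move: e; rewrite exy => /catI.
have [[t ey] | [t ex]] := cat_eq_cat_cases e.
  by rewrite ey (X_prefix_free Xx Xy ey) cats0.
by rewrite ex (X_prefix_free Xy Xx ex) cats0.
Qed.

Lemma in_AY_nil : ~ in_AY X [::].
Proof.
case=> p [y [/esym/eqP]]; rewrite -size_eq0 size_cat addn_eq0.
by move=> /andP[_ /eqP/size0nil ->] /X_nonempty.
Qed.

Lemma star_prefix_rest y1 y2 r : star X y1 -> star X y2 -> y2 = y1 ++ r ->
  r = [::] \/ in_YA X r.
Proof.
move=> s1; elim: s1 y2 r => [|x z Xx _ IH] y2 r s2 e.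
  by case: s2 e => [|x' z' Xx' _] e; [left | right; exists x', z'].
case: s2 e => [|x' z' Xx' sz'] e.
  by case: (X_nonempty Xx); case: x e {Xx IH}.
by move: e; rewrite -catA => /(prefix_free_cat_inj Xx' Xx) [_ /IH]; apply.
Qed.

Lemma star_split_exists s : exists k, star_split X s k.
Proof.
move: {2}(size s) (leqnn (size s)) => n; elim: n s => [|n IH] s hs.
  case: s hs => // _; exists 0; split=> //; split; first exact: star_nil.
  by case=> y [t [e /X_nonempty]]; case: y e.
case: (pbP (in_YA X s)) hs => [[x [s' [-> Xx]]] | ns] hs; last first.
  by exists 0; split=> //; rewrite take0 drop0; split=> //; exact: star_nil.
have x_gt0 : 0 < size x by rewrite lt0n size_eq0; apply/eqP/X_nonempty.
have [|k [hk [sk nk]]] := IH s'; first by move: hs; rewrite size_cat; lia.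
exists (size x + k); split; first by rewrite size_cat leq_add2l.
split; last by rewrite addnC -drop_drop drop_size_cat.
by rewrite takeD take_size_cat // drop_size_cat //; apply: star_cons.
Qed.

Lemma star_split_unique s k1 k2 :
  star_split X s k1 -> star_split X s k2 -> k1 = k2.
Proof.
wlog le_k12 : k1 k2 / k1 <= k2.
  by move=> H h1 h2; case: (leqP k1 k2) => [/H|/ltnW/H] ->.
move=> [h1 [s1 n1]] [h2 [s2 n2]]; apply/eqP; rewrite eqn_leq le_k12 leqNgt.
apply/negP => lt_k12.
have e : take k2 s = take k1 s ++ drop k1 (take k2 s).
  by rewrite -{1}(cat_take_drop k1 (take k2 s)) take_takel.
have [r0 | [x [r [er Xx]]]] := star_prefix_rest s1 s2 e.
  by move: r0 => /(congr1 size); rewrite size_drop size_takel //=; lia.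
by apply: n1; exists x, (r ++ drop k2 s); rewrite catA -er -drop_take_cat.
Qed.

(* The middle part of a parse with left part [take i W] is forced to be the
   maximal X^*-prefix of [drop i W]. *)
Lemma count_parses_at W (i : 'I_(size W).+1) :
  \sum_(j < (size W).+1)
     pb (i <= j /\ is_parse X W (take i W) (drop i (take j W)) (drop j W))
  = pb (~ in_AY X (take i W)).
Proof.
case: (pbP (~ in_AY X (take i W))) => nv; last first.
  by rewrite big1 // => j _; apply/eqP; rewrite eqb0; apply/pbP => [[_ [_ []]]].
have le_iW : i <= size W by rewrite -ltnS.
have parseE (j : 'I_(size W).+1) : i <= j ->
    is_parse X W (take i W) (drop i (take j W)) (drop j W) <->
    star_split X (drop i W) (j - i).
  move=> le_ij; rewrite /star_split take_drop drop_drop subnK // size_drop.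
  split=> [[_ [_ [? ?]]] | [_ [? ?]]]; first by split=> //; rewrite leq_sub2r // -ltnS.
  by split=> //; rewrite -drop_take_cat // cat_take_drop.
have [k sk] := star_split_exists (drop i W).
have lt_ik : i + k < (size W).+1 by case: sk; rewrite size_drop ltnS; lia.
apply: (@sum_bool_eq1 _ _ (Ordinal lt_ik)).
  apply/pbP; split; first exact: leq_addr.
  by apply/(parseE (Ordinal lt_ik) (leq_addr _ _)); rewrite /= addKn.
move=> j /pbP [le_ij /(parseE _ le_ij) sj]; apply: val_inj => /=.
by rewrite (star_split_unique sk sj) subnKC.
Qed.

Lemma delta_occ W : delta X W + occ X W = (size W).+1.
Proof.
rewrite /delta /occ -big_split /= (eq_bigr (fun _ => 1)) ?sum1_card ?card_ord //.
move=> i _; rewrite count_parses_at.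
by case: (pbP (in_AY X _)) => h; case: pbP.
Qed.

Lemma prefixes_in_X_le1 u : \sum_(j < size u) pb (X (take j.+1 u)) <= 1.
Proof.
apply: sum_bool_le1 => i j.
wlog le_ij : i j / i <= j.
  by move=> H Xi Xj; case: (leqP i j) => [/H|/ltnW/H] ->.
move=> /pbP Xi /pbP Xj; apply: val_inj; apply/eqP; rewrite eqn_leq le_ij /=.
have e : take j.+1 u = take i.+1 u ++ drop i.+1 (take j.+1 u).
  by rewrite -{1}(cat_take_drop i.+1 (take j.+1 u)) take_takel.
have /(congr1 size) := X_prefix_free Xi Xj e.
by rewrite size_drop size_takel ?(ltn_ord j) //=; lia.
Qed.

(* Only the whole prefix [x :: take j W] can newly end with a word of X, and
   by prefix-freeness this happens for at most one j. *)
Lemma occ_cons x W : occ X (x :: W) <= occ X W + 1.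
Proof.
rewrite /occ big_ord_recl take0 (introF (pbP _) in_AY_nil) add0n.
apply: leq_trans (leq_add (leqnn _) (prefixes_in_X_le1 (x :: W))).
rewrite -big_split; apply: leq_sum => j _ /=.
case: (pbP (in_AY X (x :: _))) => // /in_AY_cons [h | h].
  by rewrite (introT (pbP _) h) leq_addl.
by rewrite (introT (pbP _) h) leq_addr.
Qed.

Lemma occ_catl_le p q : occ X (p ++ q) <= occ X q + size p.
Proof.
elim: p => [|x p IH] /=; first by rewrite addn0.
by apply: leq_trans (occ_cons _ _) _; lia.
Qed.

Lemma delta_catr_le p q : delta X p <= delta X (p ++ q).
Proof.
have := delta_occ p; have := delta_occ (p ++ q); have := occ_catr_le X p q.
rewrite size_cat; lia.
Qed.

Lemma delta_catl_le p q : delta X q <= delta X (p ++ q).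
Proof.
have := delta_occ q; have := delta_occ (p ++ q); have := occ_catl_le p q.
rewrite size_cat; lia.
Qed.

Lemma delta_cat_straddle a b c : ~ internal_factor X b ->
  delta X (a ++ b) + delta X (b ++ c) = delta X (a ++ b ++ c) + delta X b.
Proof.
move=> nb; have := occ_cat_straddle a c nb.
have := delta_occ (a ++ b); have := delta_occ (b ++ c).
have := delta_occ (a ++ b ++ c); have := delta_occ b.
rewrite !size_cat; lia.
Qed.

Lemma degree_le_delta F d w : recurrent F -> has_Fdegree F X d -> F w ->
  ~ internal_factor X w -> d <= delta X w.
Proof.
move=> [_ [_ rec]] [le_d [z [Fz dz]]] Fw nw.
have [v1 [_ Fzv1w]] := rec _ _ Fz Fw.
have [v2 [_ Fall]] := rec _ _ Fzv1w Fz.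
have le_left : d <= delta X ((z ++ v1) ++ w) by rewrite -dz -catA delta_catr_le.
have le_right : d <= delta X (w ++ v2 ++ z) by rewrite -dz catA delta_catl_le.
have le_all : delta X ((z ++ v1) ++ w ++ v2 ++ z) <= d.
  by apply: le_d; rewrite !catA in Fall *.
have := delta_cat_straddle (z ++ v1) (v2 ++ z) nw; lia.
Qed.

End PrefixCode.

Section Kernel.
Variables (A : finType) (X : lang A).
Hypothesis pcX : prefix_code X.

Lemma delta_le_sub (Y : lang A) W : (forall y, Y y -> X y) -> delta X W <= delta Y W.
Proof.
move=> YX; have := delta_occ pcX W; have := delta_occ (prefix_code_sub YX pcX) W.
have := occ_sub W YX; lia.
Qed.

Lemma delta_internal_factor W : internal_factor X W -> delta (kernel X) W = delta X W.
Proof.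
move=> iW; have := delta_occ pcX W; have := occ_internal_factor iW.
have := delta_occ (prefix_code_sub (@kernel_sub A X) pcX) W; lia.
Qed.

Lemma delta_kernel_minn F d w : recurrent F -> has_Fdegree F X d -> F w ->
  delta X w = minn d (delta (kernel X) w).
Proof.
move=> rF dX Fw; have le_d := dX.1 _ Fw.
have le_kernel := delta_le_sub w (@kernel_sub A X).
have [iw | niw] := classic (internal_factor X w).
  by rewrite (delta_internal_factor iw); lia.
have := degree_le_delta pcX rF dX Fw niw; lia.
Qed.

End Kernel.

Section Uniqueness.
Variables (A : finType) (F : lang A).
(* Plain [factorial] would refer to ssrnat's n`!. *)
Hypothesis fF : Defs.factorial F.

Lemma in_AY_eq_of_occ (X Y : lang A) : (forall w, F w -> occ X w = occ Y w) ->
  forall u, F u -> in_AY X u <-> in_AY Y u.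
Proof.
move=> eq_occ u Fu; apply: pb_eq_iff; case/lastP: u Fu => [|W x] Fu.
  by have := eq_occ _ Fu; rewrite !occ_nil; do 2!case: pb.
have FW : F W by apply: (@fF _ [::] W [:: x] Fu); rewrite cats1.
by have := eq_occ _ Fu; rewrite !occ_rcons (eq_occ _ FW) => /addnI; do 2!case: pb.
Qed.

(* If y in Y ends with a word of X, which in turn ends with a word of Y, then
   suffix-freeness of Y makes all three words equal. *)
Lemma sub_of_in_AY (X Y : lang A) : bifix_code Y ->
  (forall u, F u -> in_AY X u <-> in_AY Y u) -> forall y, Y y -> F y -> X y.
Proof.
move=> [_ [_ Y_suffix_free]] eq_AY y Yy Fy.
have [p [x [e Xx]]] : in_AY X y by apply/eq_AY => //; exists [::], y.
have Fx : F x by apply: (@fF _ p x [::] Fy); rewrite cats0.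
have [q [y' [e' Yy']]] : in_AY Y x by apply/eq_AY => //; exists [::], x.
have : p ++ q = [::] by apply: (Y_suffix_free _ _ _ Yy' Yy); rewrite e e' catA.
by case: p e => // e _; rewrite e.
Qed.

Lemma bifix_code_eq_of_delta (X Y : lang A) : bifix_code X -> bifix_code Y ->
  (forall x, X x -> F x) -> (forall y, Y y -> F y) ->
  (forall w, F w -> delta X w = delta Y w) -> forall x, X x <-> Y x.
Proof.
move=> bX bY XF YF eq_delta.
have eq_AY : forall u, F u -> in_AY X u <-> in_AY Y u.
  apply: in_AY_eq_of_occ => w Fw.
  have := delta_occ (bifix_prefix_code bX) w.
  have := delta_occ (bifix_prefix_code bY) w; rewrite eq_delta //; lia.
have eq_YA u : F u -> in_AY Y u <-> in_AY X u by move=> Fu; split=> /(eq_AY u Fu).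
move=> x; split=> h.
  exact: (sub_of_in_AY bX eq_YA h (XF x h)).
exact: (sub_of_in_AY bY eq_AY h (YF x h)).
Qed.

End Uniqueness.

Theorem mainTheorem7 (A : finType) (F X : lang A) (d : nat) :
  recurrent F -> (forall x, X x -> F x) -> bifix_code X -> has_Fdegree F X d ->
  (forall w, F w -> delta X w = minn d (delta (kernel X) w)) /\
  (forall Y : lang A, (forall y, Y y -> F y) -> bifix_code Y -> has_Fdegree F Y d ->
     (forall x, kernel Y x <-> kernel X x) -> forall x, Y x <-> X x).
Proof.
move=> rF XF bX dX; have pX := bifix_prefix_code bX.
split=> [w Fw | Y YF bY dY eq_kernel]; first exact: (delta_kernel_minn pX rF dX Fw).
have eK : kernel Y = kernel X.
  apply: functional_extensionality => x.
  exact: propositional_extensionality (eq_kernel x).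
apply: (bifix_code_eq_of_delta rF.2.1) => // w Fw.
rewrite (delta_kernel_minn pX rF dX Fw) -eK.
exact: (delta_kernel_minn (bifix_prefix_code bY) rF dY Fw).
Qed.
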